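(* Let $S,T$ be numerical semigroups, $w$ a positive integer and $f$ a polynomial with nonnegative integer coefficients such that $\mathrm H_S(x^w)f(x)=\mathrm H_T(x)$. Let $u$ be the greatest common divisor of the exponents of the monomials occurring in $f$ with nonzero coefficient. If $u\in S$, then there exists a numerical semigroup $U$ such that $T$ is the gluing $T=uU+_{uw}wS$, that is, $T=uU+wS$ and $uw\in uU\cap wS$.
   Context: A numerical semigroup is a submonoid of $(\mathbb N,+)$ with finite complement in $\mathbb N$; $aA=\{ax:x\in A\}$ and $A+B=\{x+y:x\in A,y\in B\}$. $\mathrm H_S(x)=\sum_{s\in S}x^s$. For submonoids $T_1,T_2$ of $\mathbb N$ with $d_i=\gcd(T_i)$, a submonoid $T$ is the gluing $T=T_1+_dT_2$, $d=\mathrm{lcm}(d_1,d_2)$, if $T=T_1+T_2$ and $\mathrm{lcm}(d_1,d_2)\in T_1\cap T_2$. *)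

From mathcomp Require Import all_boot all_order all_algebra.
Set Implicit Arguments. Unset Strict Implicit. Unset Printing Implicit Defensive.
Import GRing.Theory Num.Theory.

Definition numerical_semigroup (S : pred nat) : Prop :=
  [/\ S 0, (forall a b, S a -> S b -> S (a + b)) & exists N, forall n, N <= n -> S n].

Definition scale_set (a : nat) (A : pred nat) : nat -> Prop :=
  fun n => exists2 x, A x & n = a * x.

Definition sum_set (A B : nat -> Prop) : nat -> Prop :=
  fun n => exists x y, [/\ A x, B y & n = x + y].

Definition fps := nat -> int.

Definition hilbert (S : pred nat) : fps := fun n => Posz (S n : nat).

Definition subst_pow (w : nat) (a : fps) : fps :=
  fun n => if w %| n then a (n %/ w) else 0%R.

Definition poly_mul_fps (f : {poly int}) (a : fps) : fps :=
  fun n => (\sum_(k < n.+1) f`_k * a (n - k)%N)%R.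

Definition exponent_gcd (f : {poly int}) : nat :=
  \big[gcdn/0%N]_(i < size f | (f`_i != 0)%R) (i : nat).

From mathcomp Require Import all_boot all_order all_algebra.
Import Order.TTheory GRing.Theory Num.Theory.

(* Since all coefficients are nonnegative, no cancellation occurs in
   H_S(x^w) f(x) = H_T(x): T is exactly the sumset of the support of f and
   wS.  The constant term of f is nonzero (0 lies in T), so both summands lie
   in T; every exponent of f is a multiple of u, hence T = u (T/u) + wS with
   T/u = {m | u m in T} a numerical semigroup, and uw lies in both summands
   because u lies in S and w lies in T/u. *)

Local Open Scope ring_scope.

Section PolyMulSupport.
Variables (f : {poly int}) (a : fps).
Hypotheses (f_ge0 : forall i, 0 <= f`_i) (a_ge0 : forall n, 0 <= a n).

Lemma poly_mul_fps_gt0 n :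
  0 < poly_mul_fps f a n <->
  exists k, [/\ (k <= n)%N, 0 < f`_k & 0 < a (n - k)%N].
Proof.
have term_ge0 (k : 'I_n.+1) : 0 <= f`_k * a (n - k)%N by rewrite mulr_ge0.
split.
- case: (pickP (fun k : 'I_n.+1 => 0 < f`_k * a (n - k)%N)) => [k | no_pos].
    rewrite lt0r mulf_eq0 negb_or => /andP[/andP[fk_neq0 ak_neq0] _].
    exists k; split; first by rewrite -ltnS ltn_ord.
      by rewrite lt0r fk_neq0 f_ge0.
    by rewrite lt0r ak_neq0 a_ge0.
  rewrite /poly_mul_fps big1 ?ltxx // => k _.
  by apply/eqP; rewrite eq_le term_ge0 andbT leNgt no_pos.
- move=> [k [le_kn fk_gt0 a_gt0]]; rewrite /poly_mul_fps.
  rewrite (bigD1 (Ordinal (le_kn : (k < n.+1)%N))) //=.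
  apply: (lt_le_trans (mulr_gt0 fk_gt0 a_gt0)); rewrite lerDl.
  by apply: sumr_ge0 => i _.
Qed.

End PolyMulSupport.

Arguments poly_mul_fps_gt0 {f a}.

Lemma hilbert_gt0 (S : pred nat) n : (0 < hilbert S n) = S n.
Proof. by rewrite /hilbert; case: (S n). Qed.

Lemma subst_pow_hilbert_ge0 w (S : pred nat) n : 0 <= subst_pow w (hilbert S) n.
Proof. by rewrite /subst_pow /hilbert; case: ifP. Qed.

Lemma subst_pow_hilbert_gt0 w (S : pred nat) n : (0 < w)%N ->
  0 < subst_pow w (hilbert S) n <-> scale_set w S n.
Proof.
move=> w_gt0; rewrite /subst_pow; split.
- case: ifP => [w_dvd_n | _]; last by rewrite ltxx.
  by rewrite hilbert_gt0 => Snw; exists (n %/ w)%N; rewrite // mulnC divnK.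
- by move=> [x Sx ->]; rewrite dvdn_mulr // mulKn // hilbert_gt0.
Qed.

Lemma exponent_gcd_dvd (f : {poly int}) k : f`_k != 0 -> (exponent_gcd f %| k)%N.
Proof.
move=> fk_neq0; have lt_k_size : (k < size f)%N.
  by rewrite ltnNge; apply: contra fk_neq0 => /leq_sizeP ->.
exact: (biggcdn_inf (Ordinal lt_k_size)).
Qed.

Definition quot_set (T : pred nat) (u : nat) : pred nat := fun m => T (u * m)%N.

Lemma numerical_semigroup_quot T u :
  numerical_semigroup T -> numerical_semigroup (quot_set T u).
Proof.
move=> [T0 Tadd [N TN]]; split; first by rewrite /quot_set muln0.
- by move=> a b Ta Tb; rewrite /quot_set mulnDr; apply: Tadd.
- case: (posnP u) => [-> | u_gt0]; first by exists 0%N => n _; rewrite /quot_set mul0n.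
  by exists N => n le_Nn; apply/TN/(leq_trans le_Nn); rewrite leq_pmull.
Qed.

Section HilbertSeriesFactorization.
Variables (S T : pred nat) (w : nat) (f : {poly int}).
Hypotheses (S0 : S 0%N) (T0 : T 0%N) (w_gt0 : (0 < w)%N).
Hypothesis f_ge0 : forall i, 0 <= f`_i.
Hypothesis hilbertT : forall n, poly_mul_fps f (subst_pow w (hilbert S)) n = hilbert T n.

Lemma mem_support_sumset n :
  T n <-> exists k, [/\ (k <= n)%N, 0 < f`_k & scale_set w S (n - k)].
Proof.
have support := poly_mul_fps_gt0 f_ge0 (subst_pow_hilbert_ge0 w S) n.
have scaleP m := subst_pow_hilbert_gt0 w S m w_gt0.
rewrite -hilbert_gt0 -hilbertT; split.
- by move=> /support[k [? ? /scaleP Sk]]; exists k.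
- by move=> [k [? ? /scaleP Sk]]; apply/support; exists k.
Qed.

Lemma coef0_gt0 : 0 < f`_0.
Proof. by have /mem_support_sumset[[|k] [? ? _]] := T0. Qed.

Lemma mem_coef_support k : 0 < f`_k -> T k.
Proof.
move=> fk_gt0; apply/mem_support_sumset; exists k; rewrite subnn.
by split=> //; exists 0%N; rewrite ?muln0.
Qed.

Lemma mem_scale_set n : scale_set w S n -> T n.
Proof. by move=> Sn; apply/mem_support_sumset; exists 0%N; rewrite subn0 coef0_gt0. Qed.

End HilbertSeriesFactorization.

Arguments mem_support_sumset {S T w f}.
Arguments mem_coef_support {S T w f}.
Arguments mem_scale_set {S T w f}.

Local Close Scope ring_scope.

Theorem theorem7 (S T : pred nat) (w : nat) (f : {poly int}) :
  numerical_semigroup S -> numerical_semigroup T ->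
  0 < w ->
  (forall i, (0 <= f`_i)%R) ->
  (forall n, poly_mul_fps f (subst_pow w (hilbert S)) n = hilbert T n) ->
  S (exponent_gcd f) ->
  exists U : pred nat,
    [/\ numerical_semigroup U,
        (forall n, T n <-> sum_set (scale_set (exponent_gcd f) U) (scale_set w S) n),
        scale_set (exponent_gcd f) U (exponent_gcd f * w)
      & scale_set w S (exponent_gcd f * w)].
Proof.
move=> semS semT w_gt0 f_ge0 hilbertT Su; set u := exponent_gcd f.
have [S0 _ _] := semS; have [T0 Tadd _] := semT.
have wS_sub := mem_scale_set T0 w_gt0 f_ge0 hilbertT.
exists (quot_set T u); split.
- exact: numerical_semigroup_quot.
- move=> n; split.
  + move=> /(mem_support_sumset w_gt0 f_ge0 hilbertT)[k [le_kn fk_gt0 Snk]].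
    have u_dvd_k : u %| k by apply: exponent_gcd_dvd; rewrite gt_eqF.
    exists k, (n - k); split; rewrite ?subnKC //.
    exists (k %/ u); last by rewrite mulnC divnK.
    by rewrite /quot_set mulnC divnK // (mem_coef_support S0 w_gt0 f_ge0 hilbertT).
  + by move=> [x [y [[m Tum ->] /wS_sub Ty ->]]]; apply: Tadd.
- by exists w; rewrite // /quot_set mulnC; apply: wS_sub; exists u.
- by exists u; rewrite // mulnC.
Qed.
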